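(* Let $c_1 = \frac{\sqrt5-1}{2}$. Let $g$ be a fixed real polynomial with $g(c_1)g(-c_1)>0$ and let $h > 0$. Then there exists $n_0$ (depending only on $g$ and $h$) such that for every integer polynomial $f$ all of whose coefficients are at most $h$ in absolute value, and every $n \geq n_0$, the polynomial $P_n(x) = f(x)x^n + g(x)$ satisfies $P_n(c_1)P_n(-c_1) > 0$. *)

From HB Require Import structures.
From mathcomp Require Import all_boot all_order all_algebra.
From mathcomp Require Import reals.
Set Implicit Arguments. Unset Strict Implicit. Unset Printing Implicit Defensive.
Import Order.TTheory GRing.Theory Num.Theory.
Local Open Scope ring_scope.

Definition c1 (R : realType) : R := (Num.sqrt 5 - 1) / 2.

Definition Pn (R : realType) (f : {poly int}) (g : {poly R}) (n : nat) : {poly R} :=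
  map_poly (intmul 1) f * 'X^n + g.

From HB Require Import structures.
From mathcomp Require Import all_boot all_order all_algebra.
From mathcomp Require Import reals.
From mathcomp Require Import lra.
Import Order.TTheory GRing.Theory Num.Theory.
Local Open Scope ring_scope.

(* Since 0 < c1 < 1, for |x| = c1 the term f(x) x^n is bounded by
   h / (1 - c1) * c1^n uniformly in f, and c1^n tends to 0.  Once this bound
   drops below min(|g(c1)|, |g(-c1)|), each P_n(x) has the sign of g(x) for
   x = c1 and x = -c1, hence P_n(c1) P_n(-c1) has the sign of g(c1) g(-c1). *)

Lemma c1_gt0 (R : realType) : 0 < c1 R.
Proof.
have sqrt5_gt1 : 1 < Num.sqrt (5 : R).
  by rewrite -[X in X < _]sqrtr1 ltr_sqrt //; lra.
by rewrite /c1 divr_gt0 // subr_gt0.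
Qed.

Lemma c1_lt1 (R : realType) : c1 R < 1.
Proof.
have sqrt9 : Num.sqrt (9 : R) = 3.
  by rewrite (_ : 9 = 3 ^+ 2) ?sqrtr_sqr ?ger0_norm //; lra.
have sqrt5_lt3 : Num.sqrt (5 : R) < 3 by rewrite -sqrt9 ltr_sqrt //; lra.
by rewrite /c1 ltr_pdivrMr //; lra.
Qed.

Section Geometric.
Variables (R : realFieldType) (c : R).
Hypotheses (c_ge0 : 0 <= c) (c_lt1 : c < 1).

Lemma geometric_sum_le n : \sum_(i < n) c ^+ i <= (1 - c)^-1.
Proof.
have subc_gt0 : 0 < 1 - c by rewrite subr_gt0.
rewrite -div1r ler_pdivlMr // mulrC.
have -> : (1 - c) * \sum_(i < n) c ^+ i = 1 - c ^+ n.
  by rewrite -opprB mulNr -subrX1 opprB.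
by rewrite gerBl exprn_ge0.
Qed.

(* The n + 1 first terms of the geometric sum are all at least c ^+ n. *)
Lemma exprn_mulrSn_le n : c ^+ n *+ n.+1 <= (1 - c)^-1.
Proof.
apply: le_trans (geometric_sum_le n.+1).
rewrite -[in X in X <= _](card_ord n.+1) -sumr_const.
by apply: ler_sum => i _; apply: ler_wiXn2l => //; [exact: ltW | rewrite -ltnS].
Qed.

Lemma norm_horner_le_geometric (p : {poly R}) (h x : R) :
  (forall i, `|p`_i| <= h) -> `|x| <= c -> `|p.[x]| <= h / (1 - c).
Proof.
move=> p_le x_le.
have h_ge0 : 0 <= h := le_trans (normr_ge0 _) (p_le 0%N).
rewrite horner_coef; apply: le_trans (ler_norm_sum _ _ _) _.
apply: le_trans (ler_wpM2l h_ge0 (geometric_sum_le (size p))).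
rewrite mulr_sumr; apply: ler_sum => i _.
rewrite normrM normrX; apply: ler_pM => //; first exact: exprn_ge0.
by apply: lerXn2r => //; rewrite nnegrE.
Qed.

End Geometric.

Lemma exprn_eventually_lt (R : archiRealFieldType) (c M e : R) :
  0 <= c -> c < 1 -> 0 < e ->
  exists n0, forall n, (n0 <= n)%N -> M * c ^+ n < e.
Proof.
move=> c_ge0 c_lt1 e_gt0.
have subc_gt0 : 0 < 1 - c by rewrite subr_gt0.
have ec_gt0 : 0 < e * (1 - c) by rewrite mulr_gt0.
exists (Num.bound (`|M| / (e * (1 - c)))) => n n_ge.
set K := (1 - c) *+ n.+1.
have K_gt0 : 0 < K by rewrite pmulrn_lgt0.
have M_lt : `|M| < e * K.
  rewrite mulrnAr -mulr_natr mulrC -ltr_pdivrMr //.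
  apply: lt_le_trans (archi_boundP _) _.
    exact: divr_ge0 (normr_ge0 _) (ltW ec_gt0).
  by rewrite ler_nat (leq_trans n_ge).
have cnK_le1 : c ^+ n * K <= 1.
  by rewrite mulrnAr -mulrnAl -ler_pdivlMr // div1r exprn_mulrSn_le.
apply: le_lt_trans (ler_wpM2r (exprn_ge0 n c_ge0) (ler_norm M)) _.
rewrite -(ltr_pM2r K_gt0) -mulrA; apply: le_lt_trans M_lt.
exact: ler_piMr (normr_ge0 _) cnK_le1.
Qed.

Lemma same_sign_addr (R : realDomainType) (a u : R) :
  `|u| < `|a| -> 0 < (a + u) * a.
Proof.
move=> u_lt.
have ua_lt : `|u * a| < a * a.
  have -> : a * a = `|a| * `|a| by rewrite -normrM ger0_norm // -expr2 sqr_ge0.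
  by rewrite normrM ltr_pM2r // (le_lt_trans (normr_ge0 u) u_lt).
have : - (u * a) <= `|u * a| by rewrite -normrN ler_norm.
rewrite mulrDl; lra.
Qed.

Lemma Pn_horner_same_sign (R : realType) (f : {poly int}) (g : {poly R})
    (n : nat) (x M : R) :
  `|(map_poly (intmul 1) f).[x]| <= M -> M * `|x| ^+ n < `|g.[x]| ->
  0 < (Pn f g n).[x] * g.[x].
Proof.
move=> f_le Mx_lt; rewrite /Pn !hornerE addrC same_sign_addr //.
rewrite normrM normrX; apply: le_lt_trans Mx_lt.
by rewrite ler_wpM2r ?exprn_ge0.
Qed.

Theorem lemma3p3 (R : realType) (g : {poly R}) (h : R) :
  0 < g.[c1 R] * g.[- c1 R] -> 0 < h ->
  exists n0 : nat, forall (f : {poly int}) (n : nat),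
    (forall i : nat, `|(f`_i)%:~R| <= h) -> (n0 <= n)%N ->
    0 < (Pn f g n).[c1 R] * (Pn f g n).[- c1 R].
Proof.
move=> gg_gt0 _.
have c_gt0 := c1_gt0 R; have c_lt1 := c1_lt1 R.
set c := c1 R in c_gt0 c_lt1 gg_gt0 *.
set a := g.[c] in gg_gt0 *; set b := g.[- c] in gg_gt0 *.
have [a_neq0 b_neq0] : a != 0 /\ b != 0.
  by apply/andP; rewrite -negb_or -mulf_eq0 gt_eqF.
have min_gt0 : 0 < Num.min `|a| `|b| by rewrite lt_min !normr_gt0 a_neq0 b_neq0.
have [n0 small] :=
  exprn_eventually_lt _ _ (h / (1 - c)) _ (ltW c_gt0) c_lt1 min_gt0.
exists n0 => f n f_le n_ge.
have fx_le x : `|x| = c -> `|(map_poly (intmul 1) f).[x]| <= h / (1 - c).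
  move=> x_eq; apply: (norm_horner_le_geometric _ _ (ltW c_gt0) c_lt1).
    by move=> i; rewrite coef_map_id0.
  by rewrite x_eq.
have Pa : 0 < (Pn f g n).[c] * a.
  apply: Pn_horner_same_sign (fx_le c (gtr0_norm c_gt0)) _.
  by rewrite gtr0_norm // (lt_le_trans (small n n_ge)) // ge_min lexx.
have Pb : 0 < (Pn f g n).[- c] * b.
  apply: Pn_horner_same_sign (fx_le (- c) _) _; rewrite normrN gtr0_norm //.
  by rewrite (lt_le_trans (small n n_ge)) // ge_min lexx orbT.
by have := mulr_gt0 Pa Pb; rewrite mulrACA pmulr_lgt0.
Qed.
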